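(* Let $R$ be a commutative Bézout ring and let $0\neq c\in R$. Consider: (1) for any $a,b\in R$ with $aR+bR=R$, there exist $r,s\in R$ such that $c=rs$ and $rR+sR=rR+aR=sR+bR=R$; (2) the ring $R/cR$ is clean. Then (1) implies (2). If moreover $R$ is an integral domain, then (1) and (2) are equivalent.
   Context: All rings are commutative with identity. A ring is Bézout if every finitely generated ideal is principal. A ring is clean if every element is the sum of an idempotent and a unit. *)

From mathcomp Require Import all_boot all_algebra.
Set Implicit Arguments. Unset Strict Implicit. Unset Printing Implicit Defensive.
Import GRing.Theory.
Local Open Scope ring_scope.

Section Defs.
Variable R : comNzRingType.

Definition in_pideal (c x : R) : Prop := exists k : R, x = c * k.

Definition in_fgideal (s : seq R) (x : R) : Prop :=
  exists t : seq R, size t = size s /\ x = \sum_(i < size s) s`_i * t`_i.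

Definition bezout_ring : Prop :=
  forall s : seq R, exists d : R, forall x, in_fgideal s x <-> in_pideal d x.

Definition comax (a b : R) : Prop := exists x y : R, a * x + b * y = 1.

(* integral domain (commutative, 1 <> 0 already built in) *)
Definition is_domain : Prop := forall x y : R, x * y = 0 -> x = 0 \/ y = 0.

(* Elements of R/cR, seen through representatives in R:
   equality in R/cR, idempotents, units of R/cR. *)
Definition eqmod (c x y : R) : Prop := in_pideal c (x - y).
Definition idem_mod (c e : R) : Prop := eqmod c (e * e) e.
Definition unit_mod (c u : R) : Prop := exists v : R, eqmod c (u * v) 1.

Definition clean_quot (c : R) : Prop :=
  forall x : R, exists e u : R, [/\ idem_mod c e, unit_mod c u & eqmod c x (e + u)].

Definition cond1 (c : R) : Prop :=
  forall a b : R, comax a b ->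
    exists r s : R, [/\ c = r * s, comax r s, comax r a & comax s b].
End Defs.

(* For (1) => (2): given x, apply (1) to the comaximal pair x, 1 - x to get
   c = r s with r p + s q = 1.  Then e := r p is idempotent modulo c, and
   x - e is congruent to x modulo r and to x - 1 modulo s, hence is a unit
   modulo r and modulo s, hence modulo c = r s.
   For (2) => (1) in a domain: write a x0 = e + u modulo c with e idempotent
   and u a unit.  With d1 = gcd(c, e) and d2 = gcd(c, 1 - e) one gets
   c = d1 d2 t and d1 d2 = c w, so w t = 1 since c is regular.  Then
   r := d1 and s := d2 t satisfy c = r s, r | e, s | 1 - e; modulo r the
   product a x0 is the unit u, and modulo s the product b y0 = 1 - a x0 is
   the unit -u. *)
From mathcomp Require Import all_boot all_algebra.
From mathcomp Require Import ring.
Set Implicit Arguments. Unset Strict Implicit. Unset Printing Implicit Defensive.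
Import GRing.Theory.
Local Open Scope ring_scope.

Section PrincipalIdeals.
Variable R : comNzRingType.
Implicit Types a c d r s u x y : R.

Lemma in_pidealD d x y : in_pideal d x -> in_pideal d y -> in_pideal d (x + y).
Proof. by move=> [k ->] [l ->]; exists (k + l); rewrite mulrDr. Qed.

Lemma in_pideal_trans d c x : in_pideal d c -> in_pideal c x -> in_pideal d x.
Proof. by move=> [k ->] [l ->]; exists (k * l); rewrite mulrA. Qed.

Lemma comax_eqmod r x y : eqmod r x y -> comax r y -> comax r x.
Proof.
move=> [k Hk] [p [q Hpq]]; exists (p - k * q), q.
by rewrite -Hpq -[y](subKr x) Hk; ring.
Qed.

Lemma comaxNr r x : comax r x -> comax r (- x).
Proof. by move=> [p [q Hpq]]; exists p, (- q); rewrite mulrNN. Qed.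

Lemma comax_factor r a x : comax r (a * x) -> comax r a.
Proof. by move=> [p [q Hpq]]; exists p, (x * q); rewrite mulrA. Qed.

Lemma comax_dvdl d r x : in_pideal d r -> comax r x -> comax d x.
Proof. by move=> [k ->] [p [q Hpq]]; exists (k * p), q; rewrite mulrA. Qed.

Lemma comaxMl r s x : comax r x -> comax s x -> comax (r * s) x.
Proof.
move=> [p [q Hr]] [p' [q' Hs]].
exists (p * p'), (q * (s * p') + r * p * q' + x * q * q').
by rewrite -[1](mulr1 1) -{1}Hr -Hs; ring.
Qed.

Lemma unit_modP c u : unit_mod c u <-> comax c u.
Proof.
split=> [[v [k Hk]] | [p [q Hpq]]].
  by exists (- k), v; rewrite mulrN -Hk; ring.
by exists q, (- p); rewrite -Hpq; ring.
Qed.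

End PrincipalIdeals.

Section CleanFromCond1.
Variable R : comNzRingType.
Implicit Types c r s p q x : R.

Lemma idem_mod_mul r s p q : r * p + s * q = 1 -> idem_mod (r * s) (r * p).
Proof.
move=> Hpq; exists (- (p * q)).
have -> : r * s * - (p * q) = r * p * (r * p) - r * p * (r * p + s * q) by ring.
by rewrite Hpq mulr1.
Qed.

Lemma clean_quot_of_cond1 c : cond1 c -> clean_quot c.
Proof.
move=> H1 x.
have comax_x : comax x (1 - x) by exists 1, 1; rewrite !mulr1 addrC subrK.
have [r [s [-> [p [q Hpq]] Hrx Hsx]]] := H1 x (1 - x) comax_x.
exists (r * p), (x - r * p); split; last by exists 0; ring.
- exact: idem_mod_mul Hpq.
- apply/unit_modP/comaxMl.
  + by apply: comax_eqmod Hrx; exists (- p); rewrite addrAC subrr add0r mulrN.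
  + apply: comax_eqmod (comaxNr Hsx); exists q.
    by rewrite -Hpq; ring.
Qed.

End CleanFromCond1.

Section Cond1FromClean.
Variable R : comNzRingType.
Hypothesis bezoutR : bezout_ring R.
Implicit Types a b c d e u : R.

Lemma bezout_gcd a b :
  exists d, [/\ in_pideal d a, in_pideal d b & exists y z, d = a * y + b * z].
Proof.
have [d Hd] := bezoutR [:: a; b].
have fg2 x y : in_fgideal [:: a; b] (a * x + b * y).
  by exists [:: x; y]; split => //; rewrite !big_ord_recl big_ord0 /= addr0.
exists d; split.
- by apply/Hd; have := fg2 1 0; rewrite mulr1 mulr0 addr0.
- by apply/Hd; have := fg2 0 1; rewrite mulr1 mulr0 add0r.
have /Hd [t [_ ->]] : in_pideal d d by exists 1; rewrite mulr1.
by exists t`_0, t`_1; rewrite !big_ord_recl big_ord0 /= addr0.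
Qed.

Hypothesis domainR : is_domain R.

Lemma idem_mod_factor c e : c != 0 -> idem_mod c e ->
  exists r s, [/\ c = r * s, in_pideal r e & in_pideal s (1 - e)].
Proof.
move=> c_neq0 [k Hk].
have [d1 [[m1 Hc1] [n1 He1] [y1 [z1 Hd1]]]] := bezout_gcd c e.
have [d2 [[m2 Hc2] [n2 He2] [y2 [z2 Hd2]]]] := bezout_gcd c (1 - e).
set t := n1 * m2 + m1 * n2.
have c_eq : c = d1 * d2 * t.
  have -> : d1 * d2 * t = (d1 * n1) * (d2 * m2) + (d1 * m1) * (d2 * n2).
    by rewrite /t; ring.
  by rewrite -He1 -He2 -Hc1 -Hc2; ring.
set w := y1 * c * y2 + y1 * (1 - e) * z2 + e * z1 * y2 - k * z1 * z2.
have d1d2_eq : d1 * d2 = c * w.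
  have -> : c * w = d1 * d2 + (e * e - e - c * k) * (z1 * z2).
    by rewrite /w Hd1 Hd2; ring.
  by rewrite Hk subrr mul0r addr0.
have wt1 : w * t = 1.
  have : c * (1 - w * t) = 0 by rewrite mulrBr mulr1 mulrA -d1d2_eq -c_eq subrr.
  case/domainR => [c0 | /eqP]; first by rewrite c0 eqxx in c_neq0.
  by rewrite subr_eq0 => /eqP <-.
exists d1, (d2 * t); split; first by rewrite mulrA.
- by exists n1.
- by exists (w * n2); rewrite He2 -mulrA [t * _]mulrA [t * w]mulrC wt1 mul1r.
Qed.

Lemma cond1_of_clean_quot c : c != 0 -> clean_quot c -> cond1 c.
Proof.
move=> c_neq0 Hclean a b [x0 [y0 Hab]].
have [e [u [idem_e /unit_modP comax_cu [k Hx]]]] := Hclean (a * x0).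
have [r [s [c_eq r_e s_1e]]] := idem_mod_factor c_neq0 idem_e.
have r_c : in_pideal r c by exists s.
have s_c : in_pideal s c by exists r; rewrite mulrC.
exists r, s; split => //.
- have [[n He] [m Hm]] := (r_e, s_1e).
  by exists n, m; rewrite -He -Hm addrC subrK.
- apply: comax_factor (x0) _; apply: comax_eqmod (comax_dvdl r_c comax_cu).
  rewrite /eqmod (_ : a * x0 - u = e + (a * x0 - (e + u))); last by ring.
  by apply: in_pidealD r_e (in_pideal_trans r_c _); exists k.
- apply: comax_factor (y0) _; apply: comax_eqmod (comaxNr (comax_dvdl s_c comax_cu)).
  rewrite /eqmod (_ : b * y0 - - u = 1 - e - (a * x0 - (e + u)) + (a * x0 + b * y0 - 1));
    last by ring.
  rewrite Hab subrr addr0; apply: in_pidealD => //.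
  by apply: in_pideal_trans s_c _; exists (- k); rewrite Hx mulrN.
Qed.

End Cond1FromClean.

Theorem lemma3p6 (R : comNzRingType) (c : R) :
  bezout_ring R -> c != 0 ->
  (cond1 c -> clean_quot c) /\ (is_domain R -> (cond1 c <-> clean_quot c)).
Proof.
move=> bezoutR c_neq0; split; first exact: clean_quot_of_cond1.
move=> domainR; split; first exact: clean_quot_of_cond1.
exact: cond1_of_clean_quot.
Qed.
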